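(* Let $G$ be an affine group scheme over a unital commutative ring $K$ and let $H\colon\mathbf{Ring}_K\to\mathbf{Group}$ be a subgroup functor of $G$. Suppose $H$ is scheme generated by a morphism $f\colon X\to G$ from an affine $K$-scheme $X$, and let $f'\colon X'\to G$ be a morphism from an affine $K$-scheme $X'$ with $f'(X'(R))\subseteq H(R)$ for all $R\in\mathbf{Ring}_K$. Then there is $n\ge0$ such that $$f'(X'(R))\subseteq\big(f(X(R))\cup\{1\}\cup f(X(R))^{-1}\big)^n\quad\text{for all }R\in\mathbf{Ring}_K.$$ In particular, if $f'$ also scheme generates $H$, then the group subobjects of $G$ in $\mathrm{Ind}(\mathrm{Fun}(\mathbf{Ring}^{fp}_K,\mathbf{Set}))$ generated by the images of $f$ and of $f'$ coincide.
   Context: $\mathbf{Ring}_K$ ($\mathbf{Ring}_K^{fp}$) is the category of unital (finitely presented unital) commutative $K$-algebras; schemes are identified with their functors of points. A subgroup functor $H\le G$ is scheme generated by $f\colon X\to G$ ($X$ an affine $K$-scheme) if $H(R)$ equals the abstract subgroup of $G(R)$ generated by $f(X(R))$ for every $R\in\mathbf{Ring}_K$. For subsets $Y$ of a group, $Y^n$ is the set of products of $n$ elements of $Y$. $\mathrm{Ind}(\mathbf C)$ is the ind-completion (small filtered direct systems); for a subobject $Y$ of a group object there, $\langle Y\rangle=\varinjlim_n(Y\cup\{1\}\cup Y^{-1})^n$ is the generated group subobject; $G$ and the functors of points of $X,X'$ are viewed as objects of $\mathrm{Fun}(\mathbf{Ring}^{fp}_K,\mathbf{Set})$. *)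

(* Affine K-schemes are handled through their functors of
   points on the category Ring_K of commutative unital K-algebras. *)
From HB Require Import structures.
From Stdlib Require List.
From mathcomp Require Import all_boot all_algebra.
Set Implicit Arguments. Unset Strict Implicit. Unset Printing Implicit Defensive.
Import GRing.Theory.
Local Open Scope ring_scope.

Definition is_rhom (A B : pzRingType) (f : A -> B) : Prop :=
  [/\ forall a b, f (a + b) = f a + f b,
      forall a b, f (a * b) = f a * f b & f 1 = 1].

(* Objects of Ring_K: a commutative unital ring together with its structure
   ring map K -> R (the zero ring is allowed). *)
Record kalg (K : comPzRingType) := KAlg {
  kcar :> comPzRingType;
  kstr : K -> kcar;
  kstr_hom : is_rhom kstr }.

Definition is_alghom (K : comPzRingType) (A B : kalg K) (f : A -> B) : Prop :=
  is_rhom f /\ forall k, f (kstr A k) = kstr B k.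

(* Finitely presented K-algebras: R is generated by finitely many elements
   x_0..x_{n-1} subject to finitely many polynomial relations, i.e. R is the
   quotient K[X_0..X_{n-1}]/(rels).  Polynomials over K are represented by
   formal terms; the presentation is expressed by its universal property. *)
Inductive kterm (K : comPzRingType) (n : nat) :=
| KVar of 'I_n
| KConst of K
| KAdd of kterm K n & kterm K n
| KMul of kterm K n & kterm K n
| KOpp of kterm K n.

Fixpoint keval (K : comPzRingType) (n : nat) (R : kalg K) (x : 'I_n -> R)
    (t : kterm K n) : R :=
  match t with
  | KVar i => x i
  | KConst k => kstr R k
  | KAdd a b => keval x a + keval x b
  | KMul a b => keval x a * keval x b
  | KOpp a => - keval x a
  end.

Definition fin_pres (K : comPzRingType) (R : kalg K) : Prop :=
  exists (n : nat) (x : 'I_n -> R) (rels : seq (kterm K n)),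
    [/\ forall r : R, exists t, r = keval x t,
        forall t, Stdlib.Lists.List.In t rels -> keval x t = 0 &
        forall (S : kalg K) (y : 'I_n -> S),
          (forall t, Stdlib.Lists.List.In t rels -> keval y t = 0) ->
          exists phi : R -> S, is_alghom phi /\ forall i, phi (x i) = y i].

(* Affine group scheme G = Spec O over K, given (Yoneda) as a representable
   group-valued functor: G(R) = Hom_K(O, R) carries a group structure natural
   in R. *)
Record gscheme (K : comPzRingType) := GScheme {
  gO : kalg K;
  gmul : forall R : kalg K, (gO -> R) -> (gO -> R) -> (gO -> R);
  gone : forall R : kalg K, gO -> R;
  ginv : forall R : kalg K, (gO -> R) -> (gO -> R);
  gmul_hom : forall R x y, is_alghom x -> is_alghom y -> is_alghom (@gmul R x y);
  gone_hom : forall R, is_alghom (gone R);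
  ginv_hom : forall R x, is_alghom x -> is_alghom (@ginv R x);
  gmulA : forall R x y z, is_alghom x -> is_alghom y -> is_alghom z ->
     @gmul R x (gmul y z) = gmul (gmul x y) z;
  gmul1 : forall R x, is_alghom x -> @gmul R (gone R) x = x;
  gmulV : forall R x, is_alghom x -> @gmul R (ginv x) x = gone R;
  gmul_nat : forall (R S : kalg K) (phi : R -> S) x y, is_alghom phi ->
     is_alghom x -> is_alghom y ->
     phi \o @gmul R x y = gmul (phi \o x) (phi \o y);
  gone_nat : forall (R S : kalg K) (phi : R -> S), is_alghom phi ->
     phi \o gone R = gone S;
  ginv_nat : forall (R S : kalg K) (phi : R -> S) x, is_alghom phi ->
     is_alghom x -> phi \o @ginv R x = ginv (phi \o x) }.

Section GS.
Context {K : comPzRingType} (G : gscheme K).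

Definition gsubset (R : kalg K) := (gO G -> R) -> Prop.

Definition is_subgroup (R : kalg K) (S : gsubset R) : Prop :=
  [/\ forall x, S x -> is_alghom x, S (@gone _ G R),
      forall x y, S x -> S y -> S (gmul x y) &
      forall x, S x -> S (ginv x)].

Definition gen_subgroup (R : kalg K) (Y : gsubset R) : gsubset R :=
  fun x => forall S, is_subgroup S -> (forall y, Y y -> S y) -> S x.

Definition subgroup_functor (H : forall R : kalg K, gsubset R) : Prop :=
  (forall R, is_subgroup (H R)) /\
  (forall (R S : kalg K) (phi : R -> S) x, is_alghom phi -> H R x ->
     H S (phi \o x)).

(* f(X(R)) for a morphism f : X = Spec B -> G, given by the K-algebra map
   f : O(G) -> B (pulling back points x : B -> R to x \o f). *)
Definition img (B : kalg K) (f : gO G -> B) (R : kalg K) : gsubset R :=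
  fun y => exists p : B -> R, is_alghom p /\ y = p \o f.

Definition scheme_generates (H : forall R : kalg K, gsubset R)
    (B : kalg K) (f : gO G -> B) : Prop :=
  forall (R : kalg K) x, H R x <-> gen_subgroup (@img B f R) x.

Definition symm (R : kalg K) (Y : gsubset R) : gsubset R :=
  fun y => Y y \/ y = @gone _ G R \/ exists z, Y z /\ y = ginv z.

Fixpoint gpow (R : kalg K) (Y : gsubset R) (n : nat) : gsubset R :=
  match n with
  | 0 => fun y => y = @gone _ G R
  | n'.+1 => fun y => exists a b, gpow Y n' a /\ symm Y b /\ y = gmul a b
  end.

(* The generated group subobject <Y> = colim_n (Y ∪ 1 ∪ Y^-1)^n in
   Ind(Fun(Ring_K^fp, Set)), as the nat-indexed filtered system of
   subfunctors of G restricted to finitely presented algebras. *)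
Definition ind_gen (B : kalg K) (f : gO G -> B) :
  nat -> forall R : kalg K, gsubset R :=
  fun n R y => fin_pres R /\ gpow (@img _ f R) n y.

(* Inclusion of subobjects of (the constant ind-object) G in the Ind
   category: Hom(colim_n Y_n, colim_m Y'_m) = lim_n colim_m Hom(Y_n, Y'_m),
   so "colim Y <= colim Y'" over G means each Y_n factors through some Y'_m. *)
Definition ind_sub_le (Y Y' : nat -> forall R : kalg K, gsubset R) : Prop :=
  forall n, exists m, forall (R : kalg K), fin_pres R ->
    forall y, Y n R y -> Y' m R y.

Definition ind_sub_eq (Y Y' : nat -> forall R : kalg K, gsubset R) : Prop :=
  ind_sub_le Y Y' /\ ind_sub_le Y' Y.

End GS.

(* The universal point [id] of [X'] maps under [f'] into [H(X')], which is
   generated by [f(X(X'))], so it is a word of some length [n] in [f(X(X'))]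
   and its inverses.  Every point of [X'] over [R] is the image of the
   universal point under an algebra map [X' -> R], and words of length [n]
   in the images of [f] are carried to such words by that map; so one [n]
   works for all [R].  Applying this in both directions bounds each
   generator of one system by a fixed power of the other, which gives the
   two inclusions of ind-objects. *)
From mathcomp Require Import all_boot all_algebra.

Set Implicit Arguments.
Unset Strict Implicit.
Unset Printing Implicit Defensive.

Section AlgHom.
Variable K : comPzRingType.

Lemma comp_alghom (A B C : kalg K) (p : B -> C) (q : A -> B) :
  is_alghom p -> is_alghom q -> is_alghom (p \o q).
Proof.
move=> [[pD pM p1] pK] [[qD qM q1] qK]; split; first split.
- by move=> a b /=; rewrite qD pD.
- by move=> a b /=; rewrite qM pM.
- by rewrite /= q1 p1.
- by move=> k /=; rewrite qK pK.
Qed.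

Lemma id_alghom (A : kalg K) : is_alghom (@id A).
Proof. by split; first split. Qed.

End AlgHom.

Section GroupLaws.
Variables (K : comPzRingType) (G : gscheme K) (R : kalg K).
Local Notation point := (fun x : gO G -> R => is_alghom x).
Local Notation one := (@gone _ G R).

Lemma gmulgV x : point x -> gmul x (ginv x) = one.
Proof.
move=> hx; have hx' := ginv_hom hx; have hx'' := ginv_hom hx'.
have hxx' := gmul_hom hx hx'.
rewrite -(gmul1 hxx') -{1}(gmulV hx') -(gmulA hx'' hx' hxx') (gmulA hx' hx hx').
by rewrite (gmulV hx) (gmul1 hx') (gmulV hx').
Qed.

Lemma gmulg1 x : point x -> gmul x one = x.
Proof.
move=> hx; have hx' := ginv_hom hx.
by rewrite -(gmulV hx) gmulA // gmulgV // gmul1.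
Qed.

Lemma ginv_unique a b : point a -> point b -> gmul a b = one -> a = ginv b.
Proof.
move=> ha hb ab1; have hb' := ginv_hom hb.
by rewrite -(gmulg1 ha) -(gmulgV hb) gmulA // ab1 gmul1.
Qed.

Lemma ginvK x : point x -> ginv (ginv x) = x.
Proof.
move=> hx; symmetry; apply: ginv_unique => //; [exact: ginv_hom | exact: gmulgV].
Qed.

Lemma ginv1 : ginv one = one.
Proof. by have h1 := gone_hom G R; symmetry; apply: ginv_unique; rewrite ?gmul1. Qed.

Lemma ginvM x y : point x -> point y -> ginv (gmul x y) = gmul (ginv y) (ginv x).
Proof.
move=> hx hy; have hx' := ginv_hom hx; have hy' := ginv_hom hy.
symmetry; apply: ginv_unique; [exact: gmul_hom | exact: gmul_hom |].
rewrite (gmulA (gmul_hom hy' hx') hx hy) -(gmulA hy' hx' hx) (gmulV hx).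
by rewrite (gmulg1 hy') (gmulV hy).
Qed.

End GroupLaws.

Section WordLength.
Variables (K : comPzRingType) (G : gscheme K) (R : kalg K).
Local Notation point := (fun x : gO G -> R => is_alghom x).
Local Notation one := (@gone _ G R).
Variable Y : gsubset G R.
Hypothesis Y_points : forall y, Y y -> point y.

Lemma symm_point s : symm Y s -> point s.
Proof.
case=> [/Y_points //|[-> |[z [/Y_points hz ->]]]]; [exact: gone_hom | exact: ginv_hom].
Qed.

Lemma gpow_point n y : gpow Y n y -> point y.
Proof.
elim: n y => [y -> | n IH y [a [b [ha [hb ->]]]]]; first exact: gone_hom.
by apply: gmul_hom; [exact: IH | exact: symm_point].
Qed.

Lemma gpowD m n a b : gpow Y m a -> gpow Y n b -> gpow Y (m + n) (gmul a b).
Proof.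
move=> ha; have pa := gpow_point ha.
elim: n b => [b -> | n IH b [c [s [hc [hs ->]]]]]; first by rewrite addn0 gmulg1.
rewrite addnS; exists (gmul a c), s; do !split => //; first exact: IH.
by rewrite gmulA //; [exact: gpow_point hc | exact: symm_point].
Qed.

Lemma gpow1 y : symm Y y -> gpow Y 1 y.
Proof. by move=> hy; exists one, y; do !split => //; rewrite gmul1 //; exact: symm_point. Qed.

Lemma gpow_one n : gpow Y n one.
Proof.
elim: n => [//|n IH]; exists one, one; do !split => //; first by right; left.
by rewrite gmul1 //; exact: gone_hom.
Qed.

Lemma symm_ginv s : symm Y s -> symm Y (ginv s).
Proof.
case=> [hs|[-> |[z [hz ->]]]].
- by right; right; exists s.
- by right; left; rewrite ginv1.
- by left; rewrite ginvK //; exact: Y_points.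
Qed.

Lemma gpow_ginv n y : gpow Y n y -> gpow Y n (ginv y).
Proof.
elim: n y => [y -> | n IH y [a [s [ha [hs ->]]]]]; first by rewrite ginv1.
rewrite ginvM; [|exact: gpow_point ha | exact: symm_point].
by rewrite -add1n; apply: gpowD; [exact/gpow1/symm_ginv | exact: IH].
Qed.

(* The union over [n] of the balls [gpow Y n] is a subgroup containing [Y]. *)
Lemma gen_subgroup_gpow x : gen_subgroup Y x -> exists n, gpow Y n x.
Proof.
move=> hx; apply: (hx (fun z => exists n, gpow Y n z)); last first.
  by move=> y hy; exists 1; apply: gpow1; left.
split.
- by move=> z [n hn]; exact: gpow_point hn.
- by exists 0.
- by move=> a b [m hm] [n hn]; exists (m + n); exact: gpowD.
- by move=> a [n hn]; exists n; exact: gpow_ginv.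
Qed.

End WordLength.

Lemma gpow_gpow (K : comPzRingType) (G : gscheme K) (R : kalg K)
    (Y Z : gsubset G R) k n y :
  (forall z, Z z -> is_alghom z) -> (forall y, Y y -> gpow Z k y) ->
  gpow Y n y -> gpow Z (n * k) y.
Proof.
move=> Z_points YZ; elim: n y => [y -> //| n IH y [a [s [ha [hs ->]]]]].
rewrite mulSnr; apply: (gpowD Z_points); first exact: IH.
case: hs => [/YZ //|[-> |[z [/YZ hz ->]]]]; first exact: gpow_one.
exact: gpow_ginv.
Qed.

Section Images.
Variables (K : comPzRingType) (G : gscheme K).
Variables (B : kalg K) (f : gO G -> B).
Hypothesis f_hom : is_alghom f.

Lemma img_point (R : kalg K) y : @img _ G _ f R y -> is_alghom y.
Proof. by move=> [p [hp ->]]; exact: comp_alghom. Qed.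

Lemma img_universal : @img _ G _ f B f.
Proof. by exists id; split => //; exact: id_alghom. Qed.

Lemma gpow_img_comp (R S : kalg K) (phi : R -> S) n y :
  is_alghom phi -> gpow (@img _ G _ f R) n y -> gpow (@img _ G _ f S) n (phi \o y).
Proof.
move=> hphi; elim: n y => [y -> | n IH y [a [s [ha [hs ->]]]]]; first exact: gone_nat.
have pa := gpow_point (@img_point R) ha; have ps := symm_point (@img_point R) hs.
rewrite gmul_nat //; exists (phi \o a), (phi \o s); do !split; first exact: IH.
case: hs => [[p [hp ->]]|[-> |[z [[p [hp ->]] ->]]]].
- by left; exists (phi \o p); split => //; exact: comp_alghom.
- by right; left; exact: gone_nat.
- right; right; exists (phi \o (p \o f)); split.
    by exists (phi \o p); split => //; exact: comp_alghom.
  by rewrite ginv_nat //; exact: comp_alghom.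
Qed.

End Images.

Section SchemeGenerated.
Variables (K : comPzRingType) (G : gscheme K) (H : forall R : kalg K, gsubset G R).
Variables (X : kalg K) (f : gO G -> X).
Hypotheses (f_hom : is_alghom f) (f_generates : scheme_generates H f).

Lemma scheme_generates_img (R : kalg K) y : @img _ G _ f R y -> @H R y.
Proof. by move=> hy; apply/f_generates => S _; apply. Qed.

Lemma img_gpow_bound (B : kalg K) (g : gO G -> B) :
  is_alghom g -> (forall (R : kalg K) y, @img _ G _ g R y -> @H R y) ->
  exists n, forall (R : kalg K) y, @img _ G _ g R y -> gpow (@img _ G _ f R) n y.
Proof.
move=> g_hom gH; have /f_generates := gH _ _ (img_universal g).
move=> /(gen_subgroup_gpow (@img_point _ _ _ _ f_hom _)) [n hn]; exists n.
by move=> R y [p [hp ->]]; exact: gpow_img_comp.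
Qed.

End SchemeGenerated.

Lemma ind_gen_le (K : comPzRingType) (G : gscheme K)
    (H : forall R : kalg K, gsubset G R)
    (X : kalg K) (f : gO G -> X) (X' : kalg K) (f' : gO G -> X') :
  is_alghom f -> scheme_generates H f ->
  is_alghom f' -> scheme_generates H f' -> ind_sub_le (ind_gen f) (ind_gen f').
Proof.
move=> f_hom f_generates f'_hom f'_generates.
have [k hk] := img_gpow_bound f'_hom f'_generates f_hom
  (scheme_generates_img f_generates).
move=> n; exists (n * k) => R _ y [hR hy]; split => //.
apply: (gpow_gpow _ (hk R) hy) => z; exact: img_point.
Qed.

Theorem lemma24 (K : comPzRingType) (G : gscheme K)
  (H : forall R : kalg K, gsubset G R) (HH : subgroup_functor H)
  (X : kalg K) (f : gO G -> X) (f_hom : is_alghom f)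
  (Hgen : scheme_generates H f)
  (X' : kalg K) (f' : gO G -> X') (f'_hom : is_alghom f')
  (Himg : forall (R : kalg K) y, @img _ G _ f' R y -> H R y) :
  (exists n : nat, forall (R : kalg K) y, @img _ G _ f' R y -> gpow (@img _ G _ f R) n y) /\
  (scheme_generates H f' -> ind_sub_eq (ind_gen f) (ind_gen f')).
Proof.
split; first exact: img_gpow_bound.
by move=> Hgen'; split; apply: ind_gen_le.
Qed.
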